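(* Let $R=k[x_1,\dots,x_n]$, let $f_1,\dots,f_m\in R$, $\mathbf f=(f_1,\dots,f_m)$, and $I=\langle f_1,\dots,f_m\rangle$. Fix any term order on $R$ and any term order on the free module $R^m$, and run the algorithm AGC (described in the context) on the input $f_1^{[\mathbf e_1]},\dots,f_m^{[\mathbf e_m]}$, using a partial order $<$ on the current set $G$ for the generalized rewritable criterion. If the algorithm AGC terminates after finitely many steps and the partial order $<$ is admissible, then the set $G$ it returns is a labeled Gröbner basis for $I$.
   Context: Notation: a ''polynomial in $I$'' is a pair written $f^{[\mathbf u]}$ with $\mathbf u=(p_1,\dots,p_m)\in R^m$ and $f=\mathbf u\cdot\mathbf f=\sum p_if_i$; two such pairs are equal iff both components are equal. Operations: $f^{[\mathbf u]}+g^{[\mathbf v]}=(f+g)^{[\mathbf u+\mathbf v]}$ and $ct(f^{[\mathbf u]})=(ctf)^{[ct\mathbf u]}$ for $c\in k$, $t$ a power product. $\mathbf e_i$ is the $i$-th unit vector of $R^m$. $\mathrm{lpp}$ and $\mathrm{lc}$ denote leading power product and leading coefficient (in $R$ w.r.t. the term order on $R$, in $R^m$ w.r.t. the term order on $R^m$); both orders are denoted $\prec$; convention $\mathrm{lpp}(0)=0\prec$ every nonzero power product. The signature of $f^{[\mathbf u]}$ is $\mathrm{lpp}(\mathbf u)$. A module monomial $x^\alpha\mathbf e_i$ divides $x^\beta\mathbf e_j$ iff $i=j$ and $x^\alpha\mid x^\beta$. A polynomial $0^{[\mathbf u]}$ is called a syzygy polynomial. Critical pair: for $f^{[\mathbf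 u]},g^{[\mathbf v]}$ with $f,g\neq0$, let $t=\mathrm{lcm}(\mathrm{lpp}(f),\mathrm{lpp}(g))$, $t_f=t/\mathrm{lpp}(f)$, $t_g=t/\mathrm{lpp}(g)$; if $\mathrm{lpp}(t_f\mathbf u)\succeq\mathrm{lpp}(t_g\mathbf v)$, the 4-tuple $(t_f,f^{[\mathbf u]},t_g,g^{[\mathbf v]})$ is the critical pair of $f^{[\mathbf u]}$ and $g^{[\mathbf v]}$, and its S-polynomial is $t_f(f^{[\mathbf u]})-c\,t_g(g^{[\mathbf v]})$ with $c=\mathrm{lc}(f)/\mathrm{lc}(g)$. The critical pair is regular if $\mathrm{lpp}(t_f\mathbf u)\succ\mathrm{lpp}(t_g\mathbf v)$. Partial order: a relation $<$ on the current set $G$ that is irreflexive, transitive, and such that $a<b$ does not imply $b<a$; it is updated whenever elements are added to $G$. Generalized rewritable: for $f^{[\mathbf u]}\in B$ with $f\ne0$ and a power product $t$, $t(f^{[\mathbf u]})$ is gen-rewritable by $B$ if there exists $g^{[\mathbf v]}\in B$ with $\mathrm{lpp}(\mathbf v)\mid\mathrm{lpp}(t\mathbf u)$ and $g^{[\mathbf v]}<f^{[\mathbf u]}$. A critical pair $(t_f,f^{[\mathbf u]},t_g,g^{[\mathbf v]})$ is gen-rewritable by $B$ if $t_f(f^{[\mathbf u]})$ or $t_g(g^{[\mathbf v]})$ is. One-side reduction: $f^{[\mathbf u]}$ is reducible by $h^{[\mathbf w]}\in G$ ($f,h\ne 0$) if $\mathrm{lpp}(h)\mid\mathrm{lpp}(f)$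 and $\mathrm{lpp}(t\mathbf w)\prec\mathrm{lpp}(\mathbf u)$ where $t=\mathrm{lpp}(f)/\mathrm{lpp}(h)$; a one-step reduction replaces $f^{[\mathbf u]}$ by $f^{[\mathbf u]}-ct(h^{[\mathbf w]})$, $c=\mathrm{lc}(f)/\mathrm{lc}(h)$. ''$f^{[\mathbf u]}$ is reduced to $f'^{[\mathbf u']}$ by $G$'' means $f'^{[\mathbf u']}$ is obtained by finitely many one-step reductions and is not reducible by $G$. Algorithm AGC: set $G:=\{f_i^{[\mathbf e_i]}:1\le i\le m\}\cup\{0^{[f_j\mathbf e_i-f_i\mathbf e_j]}:1\le i<j\le m\}$ and CPairs := the set of critical pairs of elements of $G$. While CPairs is nonempty: pick any critical pair $(t_f,f^{[\mathbf u]},t_g,g^{[\mathbf v]})$ in CPairs and remove it; if it is regular and not gen-rewritable by $G$, reduce its S-polynomial by $G$ to $h^{[\mathbf w]}$, add to CPairs the critical pairs of $h^{[\mathbf w]}$ with elements of $G$, and set $G:=G\cup\{h^{[\mathbf w]}\}\cup\{0^{[h\mathbf e_i-f_i\mathbf w]}:1\le i\le m\}$ (updating $<$). Return $G$. Admissible: the partial order $<$ is admissible if whenever the algorithm reduces the S-polynomial of a critical pair $(t_f,f^{[\mathbf u]},t_g,g^{[\mathbf v]})$ of $G$ to $h^{[\mathbf w]}$, after updating $<$ for $G\cup\{h^{[\mathbf w]}\}$ one has $h^{[\mathbf w]}<f^{[\mathbf u]}$. Labeled Gröbner basis: a finite set $G$ of polynomials in $I$ such that for every $f^{[\mathbf u]}$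 in $I$ with $f\ne0$ there is $g^{[\mathbf v]}\in G$ with $\mathrm{lpp}(g)\mid\mathrm{lpp}(f)$ and $\mathrm{lpp}(t\mathbf v)\preceq\mathrm{lpp}(\mathbf u)$, where $t=\mathrm{lpp}(f)/\mathrm{lpp}(g)$. *)

From HB Require Import structures.
From mathcomp Require Import all_boot all_order all_algebra.
From mathcomp Require Import mpoly.

Set Implicit Arguments.
Unset Strict Implicit.
Unset Printing Implicit Defensive.

Import GRing.Theory.
Local Open Scope ring_scope.

Definition strict_total_order (T : eqType) (lt : rel T) : Prop :=
  [/\ irreflexive lt, transitive lt,
      (forall a b, a != b -> lt a b || lt b a)
    & well_founded (fun a b => lt a b)].

Definition term_order (n : nat) (lt : rel 'X_{1..n}) : Prop :=
  strict_total_order lt /\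
  (forall a b c : 'X_{1..n}, lt a b -> lt (c + a)%MM (c + b)%MM).

(* module monomials of R^m : x^a e_i  ~  (a, i) *)
Definition modmon (n m : nat) := ('X_{1..n} * 'I_m)%type.

(* term order on R^m (not required to be related to the order on R) *)
Definition module_term_order (n m : nat) (lt : rel (modmon n m)) : Prop :=
  strict_total_order lt /\
  (forall (a b : modmon n m) (c : 'X_{1..n}),
      lt a b -> lt ((c + a.1)%MM, a.2) ((c + b.1)%MM, b.2)).

Definition omax (T : Type) (lt : rel T) (s : seq T) : option T :=
  foldr (fun a o => match o with
                    | None => Some a
                    | Some b => Some (if lt a b then b else a)
                    end) None s.

(* comparison of (optional) leading terms: lpp(0) = None is below all *)
Definition olt (T : Type) (lt : rel T) (a b : option T) : bool :=
  match a, b with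
  | None, Some _ => true
  | Some x, Some y => lt x y
  | _, _ => false
  end.

Definition ole (T : eqType) (lt : rel T) (a b : option T) : bool :=
  (a == b) || olt lt a b.

Section AGC.

Variables (k : fieldType) (n m : nat).
Variable ltR : rel 'X_{1..n}.
Variable ltM : rel (modmon n m).
Variable F : 'I_m -> {mpoly k[n]}.

Definition poly := {mpoly k[n]}.
Definition vect := {ffun 'I_m -> {mpoly k[n]}}.

(* labeled polynomial f^[u] : pair (f, u) *)
Definition lpoly := (poly * vect)%type.

Definition dotF (u : vect) : poly := \sum_(i < m) u i * F i.

Definition in_I (p : lpoly) : Prop := p.1 = dotF p.2.

Definition lpp (f : poly) : option 'X_{1..n} := omax ltR (msupp f).
Definition lc (f : poly) : k :=
  match lpp f with Some a => f@_a | None => 0 end.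

Definition vsupp (u : vect) : seq (modmon n m) :=
  flatten [seq [seq (a, i) | a <- msupp (u i)] | i <- enum 'I_m].
Definition lppv (u : vect) : option (modmon n m) := omax ltM (vsupp u).

Definition sig (p : lpoly) := lppv p.2.

Definition pdiv (a b : option 'X_{1..n}) : bool :=
  match a, b with Some x, Some y => lem x y | _, _ => false end.
Definition mdiv (a b : option (modmon n m)) : bool :=
  match a, b with
  | Some x, Some y => (x.2 == y.2) && lem x.1 y.1
  | None, None => true
  | _, _ => false
  end.

Definition vscale (c : k) (t : 'X_{1..n}) (u : vect) : vect :=
  [ffun i => c *: ('X_[t] * u i)].
Definition lpscale (c : k) (t : 'X_{1..n}) (p : lpoly) : lpoly :=
  (c *: ('X_[t] * p.1), vscale c t p.2).
Definition lpmul (t : 'X_{1..n}) (p : lpoly) : lpoly := lpscale 1 t p.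
Definition lpsub (p q : lpoly) : lpoly :=
  (p.1 - q.1, [ffun i => p.2 i - q.2 i]).

Definition unitv (i : 'I_m) : vect := [ffun j => if j == i then 1 else 0].

(* power-product quotient b / a (a divides b) *)
Definition pquot (b a : 'X_{1..n}) : 'X_{1..n} := (b - a)%MM.

Definition cpair := ('X_{1..n} * lpoly * 'X_{1..n} * lpoly)%type.

Definition cp_tf (c : cpair) := c.1.1.1.
Definition cp_f (c : cpair) := c.1.1.2.
Definition cp_tg (c : cpair) := c.1.2.
Definition cp_g (c : cpair) := c.2.

Definition crit_pair (p q : lpoly) : option cpair :=
  match lpp p.1, lpp q.1 with
  | Some a, Some b =>
      let t := mlcm a b in
      let tp := pquot t a in
      let tq := pquot t b in
      if ole ltM (sig (lpmul tq q)) (sig (lpmul tp p))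
      then Some (tp, p, tq, q) else Some (tq, q, tp, p)
  | _, _ => None
  end.

Definition crit_pairs_with (p : lpoly) (B : seq lpoly) : seq cpair :=
  pmap (crit_pair p) B.

Definition regular (c : cpair) : bool :=
  olt ltM (sig (lpmul (cp_tg c) (cp_g c))) (sig (lpmul (cp_tf c) (cp_f c))).

Definition spoly (c : cpair) : lpoly :=
  lpsub (lpmul (cp_tf c) (cp_f c))
        (lpscale (lc (cp_f c).1 / lc (cp_g c).1) (cp_tg c) (cp_g c)).

Definition gen_rewritable (B : seq lpoly) (lt : lpoly -> lpoly -> Prop)
    (t : 'X_{1..n}) (p : lpoly) : Prop :=
  p \in B /\ p.1 != 0 /\
  exists2 g, g \in B & mdiv (sig g) (sig (lpmul t p)) /\ lt g p.

Definition cp_gen_rewritable (B : seq lpoly) (lt : lpoly -> lpoly -> Prop)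
    (c : cpair) : Prop :=
  gen_rewritable B lt (cp_tf c) (cp_f c) \/
  gen_rewritable B lt (cp_tg c) (cp_g c).

Definition reducible_by (p h : lpoly) : Prop :=
  p.1 != 0 /\ h.1 != 0 /\ pdiv (lpp h.1) (lpp p.1) /\
  exists a b, lpp h.1 = Some a /\ lpp p.1 = Some b /\
              olt ltM (sig (lpmul (pquot b a) h)) (sig p).

Definition red1 (G : seq lpoly) (p q : lpoly) : Prop :=
  exists2 h, h \in G & reducible_by p h /\
    exists a b, lpp h.1 = Some a /\ lpp p.1 = Some b /\
      q = lpsub p (lpscale (lc p.1 / lc h.1) (pquot b a) h).

Inductive red_star (G : seq lpoly) : lpoly -> lpoly -> Prop :=
| red_refl p : red_star G p p
| red_step p q r : red1 G p q -> red_star G q r -> red_star G p r.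

Definition reduced_to (G : seq lpoly) (p q : lpoly) : Prop :=
  red_star G p q /\ ~ (exists2 h, h \in G & reducible_by q h).

Definition porder_on (G : seq lpoly) (lt : lpoly -> lpoly -> Prop) : Prop :=
  (forall a, a \in G -> ~ lt a a) /\
  (forall a b c, a \in G -> b \in G -> c \in G -> lt a b -> lt b c -> lt a c).

Definition extends_on (G : seq lpoly) (lt lt' : lpoly -> lpoly -> Prop) : Prop :=
  forall a b, a \in G -> b \in G -> (lt' a b <-> lt a b).

Record state := State {
  st_G : seq lpoly;
  st_CP : seq cpair;
  st_lt : lpoly -> lpoly -> Prop }.

Definition G0 : seq lpoly :=
  [seq (F i, unitv i) | i <- enum 'I_m] ++
  [seq (0, [ffun l => F ij.2 * unitv ij.1 l - F ij.1 * unitv ij.2 l])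
     | ij <- [seq (i, j) | i <- enum 'I_m, j <- enum 'I_m] & (val ij.1 < val ij.2)%N].

Definition CP0 : seq cpair :=
  flatten [seq crit_pairs_with p G0 | p <- G0].

Definition syz_of (h : lpoly) : seq lpoly :=
  [seq (0, [ffun l => h.1 * unitv i l - F i * h.2 l]) | i <- enum 'I_m].

(* One pass through the while loop.  The event is [None] if the chosen
   pair is discarded, and [Some (f^[u], h^[w])] if the S-polynomial of the
   chosen pair (t_f, f^[u], t_g, g^[v]) was reduced to h^[w] and added. *)
Inductive agc_step : state -> option (lpoly * lpoly) -> state -> Prop :=
| agc_skip G CP lt c :
    c \in CP ->
    ~ (regular c /\ ~ cp_gen_rewritable G lt c) ->
    agc_step (State G CP lt) None (State G (filter (predC1 c) CP) lt)
| agc_add G CP lt c h lt' :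
    c \in CP ->
    regular c -> ~ cp_gen_rewritable G lt c ->
    reduced_to G (spoly c) h ->
    porder_on (G ++ h :: syz_of h) lt' ->
    extends_on G lt lt' ->
    agc_step (State G CP lt) (Some (cp_f c, h))
             (State (G ++ h :: syz_of h)
                    (filter (predC1 c) CP ++ crit_pairs_with h G) lt').

(* A terminating run of AGC with N passes through the loop:
   states s 0, ..., s N, events e 0, ..., e (N-1). *)
Definition agc_run (N : nat) (s : nat -> state)
    (e : nat -> option (lpoly * lpoly)) : Prop :=
  [/\ st_G (s 0) = G0, st_CP (s 0) = CP0,
      porder_on G0 (st_lt (s 0)),
      (forall i, i < N -> agc_step (s i) (e i) (s i.+1))
    & st_CP (s N) = [::]]%N.

Definition admissible_run (N : nat) (s : nat -> state)
    (e : nat -> option (lpoly * lpoly)) : Prop :=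
  forall i f h, (i < N)%N -> e i = Some (f, h) -> st_lt (s i.+1) h f.

Definition labeled_GB (G : seq lpoly) : Prop :=
  (forall g, g \in G -> in_I g) /\
  forall p : lpoly, in_I p -> p.1 != 0 ->
    exists2 g, g \in G &
      pdiv (lpp g.1) (lpp p.1) /\
      exists a b, lpp g.1 = Some a /\ lpp p.1 = Some b /\
        ole ltM (sig (lpmul (pquot b a) g)) (sig p).

End AGC.

From Pilot Require Import Defs.
From HB Require Import structures.
From mathcomp Require Import all_boot all_order all_algebra.
From mathcomp Require Import mpoly.
From Stdlib Require Import Classical.

Set Implicit Arguments.
Unset Strict Implicit.
Unset Printing Implicit Defensive.
Import GRing.Theory.
Local Open Scope ring_scope.

(* Induction on the signature T along the well-founded module order.  For each
   T choose g in the output G, minimal for < among the elements whose signature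
   divides T, and let t g be its multiple of signature T.  Two facts are proved
   together: every p in I of signature T is covered by G, and t g is not
   one-side reducible by G.  For the first, cancel the signature of p against
   t g; the difference has smaller signature, so by induction it is reducible,
   and its leading term is either that of p (so p is covered) or that of t g
   (excluded by the second fact).  For the second, the same cancellation turns a
   reducer of t g into a minimal element g' whose multiple of some signature
   T' < T has the same leading term as t g.  The critical pair of g and g' is
   then regular; since the run terminated it was either discarded as
   gen-rewritable, or its S-polynomial was reduced and added to G below one of
   its members (admissibility): both contradict minimality. *)

Section Greatest.
Variables (T : eqType) (lt : rel T).
Hypothesis lt_order : strict_total_order lt.

Let lt_irr : irreflexive lt. Proof. by case: lt_order. Qed.
Let lt_trans : transitive lt. Proof. by case: lt_order. Qed.
Let lt_total a b : a != b -> lt a b || lt b a.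
Proof. by case: lt_order => _ _ + _; apply. Qed.

Definition is_greatest (P : T -> Prop) x := P x /\ forall y, P y -> y = x \/ lt y x.

Lemma omax_eq_None s : omax lt s = None -> s = [::].
Proof. by case: s => //= a s; case: (omax lt s). Qed.

Lemma omax_greatest s x : omax lt s = Some x -> is_greatest (fun y => y \in s) x.
Proof.
elim: s x => //= a s IH x; case E: (omax lt s) => [b|] [<-]; last first.
  by rewrite (omax_eq_None E); split=> [|y]; rewrite ?inE // => /eqP->; left.
have [bs bmax] := IH _ E; case: ifP => lt_ab.
  split=> [|y]; first by rewrite inE bs orbT.
  by rewrite inE => /orP[/eqP->|/bmax]; [right|].
split=> [|y]; first by rewrite inE eqxx.
rewrite inE => /orP[/eqP->|/bmax[->|lt_yb]]; first by left.
  by case: (eqVneq b a) => [->|/lt_total]; [left|rewrite lt_ab orbF; right].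
right; case: (eqVneq b a) => [<-//|/lt_total]; rewrite lt_ab orbF.
exact: lt_trans lt_yb.
Qed.

Lemma greatest_omax s x : is_greatest (fun y => y \in s) x -> omax lt s = Some x.
Proof.
move=> [xs xmax]; case E: (omax lt s) => [y|]; last by rewrite (omax_eq_None E) in xs.
have [ys ymax] := omax_greatest E.
case: (xmax _ ys) => [->//|lt_yx]; case: (ymax _ xs) => [->//|lt_xy].
by have := lt_trans lt_yx lt_xy; rewrite lt_irr.
Qed.

Lemma olt_omax s x : (forall y, y \in s -> lt y x) -> olt lt (omax lt s) (Some x).
Proof. by case E: (omax lt s) => [z|] //= lt_sx; apply/lt_sx; case: (omax_greatest E). Qed.

Lemma olt_omax_mem s x y : olt lt (omax lt s) (Some x) -> y \in s -> lt y x.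
Proof.
case E: (omax lt s) => [z|] /= lt_zx ys; last by rewrite (omax_eq_None E) in ys.
by have [_ /(_ y ys) [->|/lt_trans]] := omax_greatest E; last apply.
Qed.

Lemma olt_trans a b c : olt lt a b -> olt lt b c -> olt lt a c.
Proof. by case: a; case: b => //; case: c => // x y z /=; apply: lt_trans. Qed.

Lemma ole_olt_trans a b c : ole lt a b -> olt lt b c -> olt lt a c.
Proof. by case/orP=> [/eqP->//|]; apply: olt_trans. Qed.

Lemma olt_irr a : olt lt a a = false.
Proof. by case: a => //= x; rewrite lt_irr. Qed.

End Greatest.

Section GreatestDifference.
Variables (T : eqType) (lt : rel T) (R : zmodType).
Hypothesis lt_order : strict_total_order lt.
Variables (su sv sd : seq T) (cu cv : T -> R).
Hypotheses (mem_su : forall y, (y \in su) = (cu y != 0))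
  (mem_sv : forall y, (y \in sv) = (cv y != 0))
  (mem_sd : forall y, (y \in sd) = (cu y - cv y != 0)).

Let mem_sd_cat y : y \in sd -> (y \in su) || (y \in sv).
Proof.
rewrite mem_sd mem_su mem_sv; case: (eqVneq (cu y) 0) => [->|//].
by rewrite sub0r oppr_eq0 => ->; rewrite orbT.
Qed.

Lemma omax_diff_lt x : omax lt su = Some x -> olt lt (omax lt sv) (Some x) ->
  omax lt sd = Some x.
Proof.
move=> /(omax_greatest lt_order) [xu xmax] /(olt_omax_mem lt_order) sv_lt.
have [lt_irr _ _ _] := lt_order.
apply: (greatest_omax lt_order); split=> [|y /mem_sd_cat /orP[/xmax//|/sv_lt]]; last by right.
have cvx : cv x = 0 by apply/eqP; apply: contraT; rewrite -mem_sv => /sv_lt; rewrite lt_irr.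
by rewrite mem_sd cvx subr0 -mem_su.
Qed.

Lemma omax_diff_cancel x : omax lt su = Some x -> omax lt sv = Some x -> cu x = cv x ->
  olt lt (omax lt sd) (Some x).
Proof.
move=> /(omax_greatest lt_order) [_ umax] /(omax_greatest lt_order) [_ vmax] cux.
apply: (olt_omax lt_order) => y yd.
have yx : y != x by apply: contraTneq yd => ->; rewrite mem_sd cux subrr eqxx.
by case/orP: (mem_sd_cat yd) => [/umax|/vmax] [/eqP|]; rewrite ?(negbTE yx).
Qed.

End GreatestDifference.

Lemma omax_diff_neq (T : eqType) (lt : rel T) (R : zmodType) (su sv sd : seq T)
    (cu cv : T -> R) x :
  strict_total_order lt ->
  (forall y, (y \in su) = (cu y != 0)) -> (forall y, (y \in sv) = (cv y != 0)) ->
  (forall y, (y \in sd) = (cu y - cv y != 0)) ->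
  omax lt su = Some x -> omax lt sv != Some x ->
  omax lt sd = if olt lt (omax lt sv) (Some x) then Some x else omax lt sv.
Proof.
move=> lt_order mem_su mem_sv mem_sd hu hv; case: ifP => lt_vx.
  exact: (omax_diff_lt lt_order mem_su mem_sv mem_sd hu lt_vx).
have [_ _ lt_total _] := lt_order.
case E: (omax lt sv) hv lt_vx => [y|] //; rewrite /= => neq_yx not_lt_yx.
have lt_xy : olt lt (omax lt su) (Some y).
  by rewrite hu /=; move: (lt_total y x neq_yx); rewrite not_lt_yx.
apply: (omax_diff_lt lt_order mem_sv mem_su) => // z.
by rewrite mem_sd -opprB oppr_eq0.
Qed.

Section LeadingTerms.
Variables (k : fieldType) (n m : nat).
Variables (ltR : rel 'X_{1..n}) (ltM : rel (modmon n m)) (F : 'I_m -> {mpoly k[n]}).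
Hypotheses (ltR_order : term_order ltR) (ltM_order : module_term_order ltM).

Let ltR_total : strict_total_order ltR. Proof. by case: ltR_order. Qed.
Let ltM_total : strict_total_order ltM. Proof. by case: ltM_order. Qed.

Local Notation poly := {mpoly k[n]}.
Local Notation vect := (vect k n m).
Local Notation lpoly := (lpoly k n m).
Local Notation cpair := (cpair k n m).
Local Notation lpp := (@Defs.lpp k n ltR).
Local Notation lppv := (@Defs.lppv k n m ltM).
Local Notation sig := (@Defs.sig k n m ltM).
Local Notation dotF := (@Defs.dotF k n m F).
Local Notation in_I := (@Defs.in_I k n m F).

Definition mshift (t : 'X_{1..n}) (x : modmon n m) : modmon n m := ((t + x.1)%MM, x.2).

Lemma ltM_mshift t : {mono mshift t : x y / ltM x y}.
Proof.
have [[irr tr tot _] shiftK] := ltM_order; move=> x y.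
apply/idP/idP => [lt_xy|]; last exact: shiftK.
case: (eqVneq x y) => [eq_xy|/tot/orP[//|lt_yx]]; first by rewrite eq_xy irr in lt_xy.
by have := tr _ _ _ lt_xy (shiftK _ _ t lt_yx); rewrite irr.
Qed.

Lemma mshiftD w t x : mshift (w + t) x = mshift w (mshift t x).
Proof. by rewrite /mshift /= addmA. Qed.

Lemma mdiv_mshift t X x : mdiv X (Some x) -> mdiv X (Some (mshift t x)).
Proof. by case: X => //= y /andP[-> le_yx]; exact: lepm_trans le_yx (lem_addl _ _). Qed.

Lemma subm_split (a l b : 'X_{1..n}) : (a <= l)%MM -> (l <= b)%MM ->
  (b - a)%MM = ((b - l) + (l - a))%MM.
Proof.
move=> /mnm_lepP le_al /mnm_lepP le_lb; apply/mnmP => j; rewrite !(mnmBE, mnmDE).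
by rewrite addnBA ?le_al // subnK ?le_lb.
Qed.

Lemma mdiv_refl (X : option (modmon n m)) : mdiv X X.
Proof. by case: X => //= x; rewrite eqxx lepm_refl. Qed.

Lemma msupp_XM_mem t (f : poly) b : b \in msupp ('X_[t] * f) ->
  exists2 a, b = (t + a)%MM & a \in msupp f.
Proof. by rewrite mulrC (perm_mem (msuppMX f t)) => /mapP[a af ->]; exists a. Qed.

Lemma mcoeff_XM t (f : poly) a : ('X_[t] * f)@_(t + a) = f@_a.
Proof. by rewrite mulrC mcoeffMX. Qed.

Lemma lpp_eqN (f : poly) : (lpp f == None) = (f == 0).
Proof.
apply/eqP/eqP => [/omax_eq_None|->]; first exact: msuppnil0.
by rewrite /Defs.lpp; have /eqP-> : msupp (0 : poly) == [::] by rewrite msupp_eq0.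
Qed.

Lemma lpp_scaleXM c t (f : poly) : c != 0 ->
  lpp (c *: ('X_[t] * f)) = omap (fun a => (t + a)%MM) (lpp f).
Proof.
move=> c_neq0; case E: (lpp f) => [a|] /=; last first.
  by move/eqP: E; rewrite lpp_eqN => /eqP->; rewrite mulr0 scaler0; apply/eqP; rewrite lpp_eqN.
have [af amax] := omax_greatest ltR_total E.
apply: (greatest_omax ltR_total); split.
  by rewrite mcoeff_msupp mcoeffZ mcoeff_XM mulf_neq0 // -mcoeff_msupp.
move=> y; rewrite mcoeff_msupp mcoeffZ mulf_eq0 negb_or => /andP[_].
rewrite -mcoeff_msupp => /msupp_XM_mem[b -> /amax[->|lt_ba]]; first by left.
by right; case: ltR_order => _; apply.
Qed.

Lemma lpp_subr (f g : poly) x : lpp f = Some x -> lpp g != Some x ->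
  lpp (f - g) = if olt ltR (lpp g) (Some x) then Some x else lpp g.
Proof.
by apply: (omax_diff_neq (cu := fun a => f@_a) (cv := fun a => g@_a)) => // y;
  rewrite mcoeff_msupp ?mcoeffB.
Qed.

Definition vcoef (u : vect) (x : modmon n m) := (u x.2)@_x.1.

Lemma mem_vsupp u x : (x \in vsupp u) = (vcoef u x != 0).
Proof.
apply/flattenP/idP => [[_ /mapP[i _ ->] /mapP[a + ->]]|ux]; first by rewrite mcoeff_msupp.
exists [seq (a, x.2) | a <- msupp (u x.2)]; first by apply/mapP; exists x.2; rewrite ?mem_enum.
by apply/mapP; exists x.1; rewrite ?mcoeff_msupp //; case: x {ux}.
Qed.

Lemma lppv_eq_None (u : vect) : lppv u = None -> u = 0.
Proof.
move/omax_eq_None => u_nil; apply/ffunP => i; apply/mpolyP => a.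
rewrite !ffunE mcoeff0; apply/eqP; apply: contraT => ua.
have : (a, i) \in vsupp u by rewrite mem_vsupp.
by rewrite u_nil.
Qed.

Lemma lppv_coef (u : vect) x : lppv u = Some x -> vcoef u x != 0.
Proof. by case/(omax_greatest ltM_total); rewrite mem_vsupp. Qed.

Lemma vcoef_scale c t (u : vect) x : vcoef (vscale c t u) (mshift t x) = c * vcoef u x.
Proof. by rewrite /vcoef /vscale ffunE mcoeffZ mcoeff_XM. Qed.

Lemma vsupp_scale c t (u : vect) y : y \in vsupp (vscale c t u) ->
  exists2 x, y = mshift t x & x \in vsupp u.
Proof.
case: y => b i; rewrite mem_vsupp /vcoef /= ffunE mcoeffZ mulf_eq0 negb_or => /andP[_].
rewrite -mcoeff_msupp => /msupp_XM_mem[a -> ua].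
by exists (a, i); rewrite // mem_vsupp /vcoef -mcoeff_msupp.
Qed.

Lemma lppv_scale c t (u : vect) : c != 0 -> lppv (vscale c t u) = omap (mshift t) (lppv u).
Proof.
move=> c_neq0; case E: (lppv u) => [x|] /=; last first.
  case E': (lppv _) => [y|] //; have [/vsupp_scale[x _] + _] := omax_greatest ltM_total E'.
  by rewrite (omax_eq_None E).
have [xu xmax] := omax_greatest ltM_total E.
apply: (greatest_omax ltM_total); split.
  by rewrite mem_vsupp vcoef_scale mulf_neq0 // -mem_vsupp.
move=> _ /vsupp_scale[y -> /xmax[->|lt_yx]]; first by left.
by right; rewrite ltM_mshift.
Qed.

Lemma lppv_scale0 t (u : vect) : lppv (vscale 0 t u) = None.
Proof.
case E: (lppv _) => [x|] //; have := lppv_coef E.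
by rewrite /vcoef ffunE scale0r mcoeff0 eqxx.
Qed.

Lemma sig_lpmul t (p : lpoly) : sig (lpmul t p) = omap (mshift t) (sig p).
Proof. exact: lppv_scale (oner_neq0 _). Qed.

Lemma sig_lpmulD w t (p : lpoly) :
  sig (lpmul (w + t) p) = omap (mshift w) (sig (lpmul t p)).
Proof. by rewrite !sig_lpmul; case: (sig p) => //= x; rewrite mshiftD. Qed.

Lemma lpp_lpmul t (p : lpoly) : lpp (lpmul t p).1 = omap (fun a => (t + a)%MM) (lpp p.1).
Proof. exact: lpp_scaleXM (oner_neq0 _). Qed.

Lemma lpp_lpscale c t (p : lpoly) : c != 0 -> lpp (lpscale c t p).1 = lpp (lpmul t p).1.
Proof. by move=> c_neq0; rewrite lpp_lpmul [LHS]lpp_scaleXM. Qed.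

Lemma sig_lpscale c t (p : lpoly) : c != 0 -> sig (lpscale c t p) = sig (lpmul t p).
Proof. by move=> c_neq0; rewrite sig_lpmul [LHS]lppv_scale. Qed.

Lemma sig_lpscale_lt c t (p : lpoly) X :
  olt ltM (sig (lpmul t p)) X -> olt ltM (sig (lpscale c t p)) X.
Proof.
case: (eqVneq c 0) => [->|/sig_lpscale->//].
by rewrite [sig (lpscale _ _ _)]lppv_scale0; case: X; case: (sig _).
Qed.

Lemma sig_lpsub_lt (p q : lpoly) : olt ltM (sig q) (sig p) -> sig (lpsub p q) = sig p.
Proof.
rewrite /Defs.sig /=; case E: (lppv p.2) => [x|]; last by case: (lppv q.2).
by apply: (omax_diff_lt ltM_total (cu := vcoef p.2) (cv := vcoef q.2) _ _ _ E) => y;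
  rewrite mem_vsupp // /vcoef ffunE mcoeffB.
Qed.

Lemma sig_lpsub_cancel (p q : lpoly) x : sig p = Some x -> sig q = Some x ->
  vcoef p.2 x = vcoef q.2 x -> olt ltM (sig (lpsub p q)) (Some x).
Proof.
by apply: (omax_diff_cancel ltM_total (cu := vcoef p.2) (cv := vcoef q.2)) => y;
  rewrite mem_vsupp // /vcoef ffunE mcoeffB.
Qed.

Lemma dotF_scale c t (u : vect) : dotF (vscale c t u) = c *: ('X_[t] * dotF u).
Proof.
rewrite /Defs.dotF mulr_sumr scaler_sumr; apply: eq_bigr => i _.
by rewrite ffunE -scalerAl mulrA.
Qed.

Lemma dotF_sub (u v : vect) : dotF [ffun i => u i - v i] = dotF u - dotF v.
Proof. by rewrite /Defs.dotF -sumrB; apply: eq_bigr => i _; rewrite ffunE mulrBl. Qed.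

Lemma inI_lpscale c t (p : lpoly) : in_I p -> in_I (lpscale c t p).
Proof. by rewrite /Defs.in_I /= dotF_scale => ->. Qed.

Lemma inI_lpsub (p q : lpoly) : in_I p -> in_I q -> in_I (lpsub p q).
Proof. by rewrite /Defs.in_I /= dotF_sub => -> ->. Qed.

Lemma inI_sig (p : lpoly) : in_I p -> p.1 != 0 -> exists x, sig p = Some x.
Proof.
move=> pI; case E: (sig p) => [x|]; first by exists x.
by rewrite pI (lppv_eq_None E) /Defs.dotF big1 ?eqxx // => i _; rewrite ffunE mul0r.
Qed.

Lemma sig_cancel (p g : lpoly) t x : in_I p -> in_I g -> sig p = Some x ->
  sig (lpmul t g) = Some x -> exists2 c, c != 0 &
  in_I (lpsub p (lpscale c t g)) /\ olt ltM (sig (lpsub p (lpscale c t g))) (Some x).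
Proof.
move=> pI gI sig_p sig_tg; set c := vcoef p.2 x / vcoef (lpmul t g).2 x.
have c_neq0 : c != 0 by rewrite mulf_neq0 ?invr_eq0 ?lppv_coef.
exists c => //; split; first by apply: inI_lpsub => //; apply: inI_lpscale.
apply: sig_lpsub_cancel; rewrite ?sig_lpscale //.
have -> : vcoef (lpscale c t g).2 x = c * vcoef (lpmul t g).2 x.
  by rewrite /vcoef /= !ffunE !mcoeffZ mul1r.
by rewrite divfK ?lppv_coef.
Qed.

Lemma sig_spoly (c : cpair) : regular ltM c ->
  sig (spoly ltR c) = sig (lpmul (cp_tf c) (cp_f c)).
Proof. by move=> c_reg; apply: sig_lpsub_lt; apply: sig_lpscale_lt. Qed.

Lemma inI_spoly (c : cpair) : in_I (cp_f c) -> in_I (cp_g c) -> in_I (spoly ltR c).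
Proof. by move=> fI gI; apply: inI_lpsub; apply: inI_lpscale. Qed.

Lemma red_star_sig (G : seq lpoly) p q : red_star ltR ltM G p q ->
  sig q = sig p /\ ({in G, forall g, in_I g} -> in_I p -> in_I q).
Proof.
elim=> // {}p {}q r [h hG [[_ [_ [_ [a [b [ha [hb lt_sig]]]]]]]]].
case=> a' [b' [+ [+ ->]]]; rewrite ha hb => -[<-] [<-] _ [sig_r inI_r].
split=> [|GI pI]; first by rewrite sig_r sig_lpsub_lt //; apply: sig_lpscale_lt.
by apply/inI_r/inI_lpsub/inI_lpscale/GI.
Qed.

End LeadingTerms.

Lemma seq_minimal (T : eqType) (R : T -> T -> Prop) (P : pred T) (s : seq T) :
  (forall x, x \in s -> ~ R x x) ->
  (forall x y z, x \in s -> y \in s -> z \in s -> R x y -> R y z -> R x z) ->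
  has P s -> exists y, [/\ y \in s, P y & forall z, z \in s -> P z -> ~ R z y].
Proof.
elim: s => //= a s IH irr tr hasP_as.
have irr_s x : x \in s -> ~ R x x by move=> xs; apply: irr; rewrite inE xs orbT.
have tr_s x y z : x \in s -> y \in s -> z \in s -> R x y -> R y z -> R x z.
  by move=> xs ys zs; apply: tr; rewrite inE ?xs ?ys ?zs orbT.
have a_min : P a -> (forall z, z \in s -> P z -> ~ R z a) ->
    exists y, [/\ y \in a :: s, P y & forall z, z \in a :: s -> P z -> ~ R z y].
  move=> Pa none_below; exists a; split; rewrite ?inE ?eqxx //.
  by move=> z; rewrite inE => /orP[/eqP-> _|]; [apply: irr; rewrite inE eqxx|apply: none_below].
have [/(IH irr_s tr_s)[y [ys Py y_min]]|/hasPn no_Ps] := boolP (has P s); last first.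
  apply: a_min => [|z /no_Ps/negbTE->//].
  by case/orP: hasP_as => // /hasP[z /no_Ps/negP nPz /nPz].
have [[Pa Ray]|a_not_below] := classic (P a /\ R a y).
  apply: a_min => // z zs Pz Rza; apply: (y_min z zs Pz).
  by apply: tr Rza Ray; rewrite ?inE ?zs ?ys ?eqxx ?orbT.
exists y; split; rewrite ?inE ?ys ?orbT //.
by move=> z; rewrite inE => /orP[/eqP-> Pa Ray|]; [apply: a_not_below|apply: y_min].
Qed.

Section AGCRun.
Variables (k : fieldType) (n m : nat).
Variables (ltR : rel 'X_{1..n}) (ltM : rel (modmon n m)) (F : 'I_m -> {mpoly k[n]}).
Hypotheses (ltR_order : term_order ltR) (ltM_order : module_term_order ltM).

Local Notation poly := {mpoly k[n]}.
Local Notation vect := (vect k n m).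
Local Notation lpoly := (lpoly k n m).
Local Notation state := (state k n m).
Local Notation lpp := (@Defs.lpp k n ltR).
Local Notation sig := (@Defs.sig k n m ltM).
Local Notation dotF := (@Defs.dotF k n m F).
Local Notation in_I := (@Defs.in_I k n m F).
Local Notation crit_pair := (@Defs.crit_pair k n m ltR ltM).
Local Notation agc_step := (@Defs.agc_step k n m ltR ltM F).
Local Notation unitv := (@Defs.unitv k n m).

Lemma dotF_unitv i : dotF (unitv i) = F i.
Proof.
rewrite /Defs.dotF (bigD1 i) //= big1 ?addr0 => [|j /negbTE j_neq_i];
  by rewrite ffunE ?eqxx ?mul1r ?j_neq_i ?mul0r.
Qed.

Lemma dotF_koszul (p : poly) (u : vect) i :
  dotF [ffun l => p * unitv i l - F i * u l] = p * F i - F i * dotF u.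
Proof.
rewrite /Defs.dotF; under eq_bigr => l _ do rewrite ffunE mulrBl -!mulrA.
by rewrite sumrB -!mulr_sumr -[\sum_l _]/(dotF (unitv i)) dotF_unitv.
Qed.

Lemma sig_unitv i : sig (F i, unitv i) = Some (0%MM, i).
Proof.
apply: (greatest_omax (proj1 ltM_order)); split.
  by rewrite mem_vsupp /vcoef /unitv ffunE eqxx mcoeff1 eqxx oner_eq0.
move=> [a j]; rewrite mem_vsupp /vcoef /unitv ffunE /=.
case: (eqVneq j i) => [->|_]; last by rewrite mcoeff0 eqxx.
by rewrite mcoeff1; case: (eqVneq a 0%MM) => [->|]; [left|rewrite eqxx].
Qed.

Lemma unitv_in_G0 i : (F i, unitv i) \in G0 F.
Proof. by rewrite mem_cat map_f ?mem_enum. Qed.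

Lemma G0_inI g : g \in G0 F -> in_I g.
Proof.
rewrite mem_cat => /orP[/mapP[i _ ->]|/mapP[[i j] _ ->]]; rewrite /Defs.in_I /=.
  by rewrite dotF_unitv.
by rewrite dotF_koszul dotF_unitv mulrC subrr.
Qed.

Lemma syz_of_inI h g : in_I h -> g \in syz_of F h -> in_I g.
Proof. by move=> hI /mapP[i _ ->]; rewrite /Defs.in_I dotF_koszul -hI mulrC subrr. Qed.

Lemma syz_of_eq0 h g : g \in syz_of F h -> g.1 = 0.
Proof. by case/mapP=> i _ ->. Qed.

Lemma crit_pair_mem p q c : crit_pair p q = Some c ->
  (cp_f c = p /\ cp_g c = q) \/ (cp_f c = q /\ cp_g c = p).
Proof.
rewrite /Defs.crit_pair; case: (lpp p.1) => // a; case: (lpp q.1) => // b.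
by case: ifP => _ [<-]; [left|right].
Qed.

Lemma crit_pair_neq0 p q c : crit_pair p q = Some c -> p.1 != 0 /\ q.1 != 0.
Proof.
rewrite /Defs.crit_pair -!(lpp_eqN ltR).
by case: (lpp p.1) => // a; case: (lpp q.1).
Qed.

Lemma crit_pair_exists p q : p.1 != 0 -> q.1 != 0 -> exists c, crit_pair p q = Some c.
Proof.
rewrite -!(lpp_eqN ltR) /Defs.crit_pair.
case: (lpp p.1) => // a _; case: (lpp q.1) => // b _.
by case: ifP => _; eexists.
Qed.

Lemma crit_pair_regular p q a b : lpp p.1 = Some a -> lpp q.1 = Some b ->
  olt ltM (sig (lpmul (mlcm a b - b)%MM q)) (sig (lpmul (mlcm a b - a)%MM p)) ->
  let c := ((mlcm a b - a)%MM, p, (mlcm a b - b)%MM, q) in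
  crit_pair p q = Some c /\ crit_pair q p = Some c.
Proof.
move=> lpp_p lpp_q lt_qp; have ltM_total := proj1 ltM_order.
rewrite /Defs.crit_pair lpp_p lpp_q /pquot (mlcmC b a) /ole lt_qp orbT.
set x := sig (lpmul _ p) in lt_qp *; set y := sig (lpmul _ q) in lt_qp *.
have -> // : (x == y) || olt ltM x y = false.
apply/negbTE; rewrite negb_or; apply/andP; split.
  by apply: contraTneq lt_qp => ->; rewrite olt_irr.
by apply/negP => /(olt_trans ltM_total lt_qp); rewrite olt_irr.
Qed.

Definition agc_invariant (st : state) :=
  [/\ forall g, g \in st_G st -> in_I g, porder_on (st_G st) (st_lt st)
    & forall c, c \in st_CP st ->
        exists p q, [/\ p \in st_G st, q \in st_G st & crit_pair p q = Some c]].

Lemma agc_step_mono st ev st' : agc_step st ev st' ->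
  {subset st_G st <= st_G st'} /\ extends_on (st_G st) (st_lt st) (st_lt st').
Proof. by case=> // G CP lt c h lt' *; split=> // x xG; rewrite mem_cat xG. Qed.

Lemma agc_step_invariant st ev st' : agc_step st ev st' ->
  agc_invariant st -> agc_invariant st'.
Proof.
case=> [G CP lt c _ _|G CP lt c h lt' cCP _ _ [red _] lt'_order _] [GI lt_order CP_G] /=.
  by split=> // c'; rewrite mem_filter => /andP[_]; apply: CP_G.
have [p [q [pG qG pq_c]]] := CP_G c cCP.
have [fG gG] : cp_f c \in G /\ cp_g c \in G by case: (crit_pair_mem pq_c) => -[-> ->].
have hI : in_I h by apply: (proj2 (red_star_sig F ltM_order red)) GI (inI_spoly _ (GI _ fG) (GI _ gG)).
have sub : {subset G <= G ++ h :: syz_of F h} by move=> x xG; rewrite mem_cat xG.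
have hG : h \in G ++ h :: syz_of F h by rewrite mem_cat inE eqxx orbT.
split=> // [g|c'].
  by rewrite mem_cat inE => /or3P[/GI|/eqP->|/(syz_of_inI hI)].
rewrite mem_cat mem_filter => /orP[/andP[_ /CP_G[p' [q' [p'G q'G pq_c']]]]|].
  by exists p', q'; split=> //; apply: sub.
by rewrite mem_pmap => /mapP[q' q'G hq_c']; exists h, q'; split=> //; apply: sub.
Qed.

Lemma agc_step_pairs st ev st' : agc_step st ev st' ->
  forall x y, x \in st_G st' -> y \in st_G st' -> x.1 != 0 -> y.1 != 0 -> x != y ->
  (x \in st_G st /\ y \in st_G st) \/
  exists2 c, c \in st_CP st' & crit_pair x y = Some c \/ crit_pair y x = Some c.
Proof.
case=> [G CP lt c _ _ x y xG yG|G CP lt c h lt' _ _ _ _ _ _ x y]; first by left.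
set CP' := filter _ CP ++ _.
have new_pair z : z \in G -> h.1 != 0 -> z.1 != 0 ->
    exists2 c', c' \in CP' & crit_pair h z = Some c'.
  move=> zG h_neq0 z_neq0; have [c' hz_c'] := crit_pair_exists h_neq0 z_neq0.
  exists c' => //.
  by rewrite mem_cat mem_pmap -hz_c' map_f ?orbT.
rewrite !mem_cat !inE => /or3P[xG|/eqP->|/syz_of_eq0->] /or3P[yG|/eqP->|/syz_of_eq0->];
  rewrite ?eqxx // => x_neq0 y_neq0 _; [by left| |].
- by right; have [c' ? ?] := new_pair x xG y_neq0 x_neq0; exists c'; [|right].
- by right; have [c' ? ?] := new_pair y yG x_neq0 y_neq0; exists c'; [|left].
Qed.

Lemma agc_step_discards st ev st' c : agc_step st ev st' ->
  c \in st_CP st -> c \notin st_CP st' ->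
  ~ (regular ltM c /\ ~ cp_gen_rewritable ltM (st_G st) (st_lt st) c) \/
  exists h, [/\ ev = Some (cp_f c, h), sig h = sig (lpmul (cp_tf c) (cp_f c))
              & h \in st_G st'].
Proof.
case=> [G CP lt c' _ c'_skip|G CP lt c' h lt' _ c'_reg _ [red _] _ _] /= cCP.
  by rewrite mem_filter cCP andbT negbK => /eqP->; left.
rewrite mem_cat mem_filter cCP andbT negb_or negbK => /andP[/eqP-> _]; right.
exists h; split=> //; last by rewrite mem_cat inE eqxx orbT.
by rewrite (proj1 (red_star_sig F ltM_order red)) sig_spoly.
Qed.

Lemma gen_rewritable_mono (B B' : seq lpoly) lt lt' t p :
  {subset B <= B'} -> extends_on B lt lt' ->
  gen_rewritable ltM B lt t p -> gen_rewritable ltM B' lt' t p.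
Proof.
move=> sub ext [pB [p_neq0 [g gB [g_div lt_gp]]]]; split; first exact: sub.
by split=> //; exists g; [exact: sub|split=> //; apply/ext].
Qed.

Lemma cp_gen_rewritable_mono (B B' : seq lpoly) lt lt' c :
  {subset B <= B'} -> extends_on B lt lt' ->
  cp_gen_rewritable ltM B lt c -> cp_gen_rewritable ltM B' lt' c.
Proof. by move=> sub ext [] /(gen_rewritable_mono sub ext); [left|right]. Qed.

Section Run.
Variables (N : nat) (s : nat -> state) (e : nat -> option (lpoly * lpoly)).
Hypotheses (run : agc_run ltR ltM F N s e) (admissible : admissible_run N s e).

Local Notation G := (st_G (s N)).
Local Notation L := (st_lt (s N)).

Lemma run_step i : (i < N)%N -> agc_step (s i) (e i) (s i.+1).
Proof. by case: run => _ _ _ + _; apply. Qed.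

Lemma run_invariant i : (i <= N)%N -> agc_invariant (s i).
Proof.
elim: i => [_|i IH lt_iN]; last exact: agc_step_invariant (run_step lt_iN) (IH (ltnW lt_iN)).
rewrite /agc_invariant; case: run => -> -> lt0_order _ _; split=> //; first exact: G0_inI.
move=> c /flattenP[_ /mapP[p pG ->]]; rewrite mem_pmap => /mapP[q qG pq_c].
by exists p, q.
Qed.

Lemma run_mono i j : (i <= j)%N -> (j <= N)%N ->
  {subset st_G (s i) <= st_G (s j)} /\ extends_on (st_G (s i)) (st_lt (s i)) (st_lt (s j)).
Proof.
elim: j => [|j IH] le_ij le_jN.
  by move: le_ij; rewrite leqn0 => /eqP->; split=> // a b.
case: (ltngtP i j.+1) le_ij => // [lt_ij _|<-]; last by split=> // a b.
have [sub1 ext1] := IH lt_ij (ltnW le_jN).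
have [sub2 ext2] := agc_step_mono (run_step le_jN).
split=> [x /sub1/sub2 //|a b aG bG]; rewrite ext2 ?ext1 //; exact: sub1.
Qed.

Lemma run_pairs j : (j <= N)%N -> forall x y,
  x \in st_G (s j) -> y \in st_G (s j) -> x.1 != 0 -> y.1 != 0 -> x != y ->
  exists i, exists2 c, (i <= j)%N /\ c \in st_CP (s i) &
    crit_pair x y = Some c \/ crit_pair y x = Some c.
Proof.
elim: j => [_|j IH lt_jN] x y xG yG x_neq0 y_neq0 x_neq_y.
  have [c xy_c] := crit_pair_exists x_neq0 y_neq0.
  exists 0%N, c; last by left.
  case: run xG yG => -> -> _ _ _ xG yG; split=> //.
  apply/flattenP; exists (crit_pairs_with ltR ltM x (G0 F)); first exact: map_f.
  by rewrite mem_pmap -xy_c map_f.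
case: (agc_step_pairs (run_step lt_jN) xG yG x_neq0 y_neq0 x_neq_y) => [[xG' yG']|[c cCP xy_c]].
  have [i [c [le_ij cCP] xy_c]] := IH (ltnW lt_jN) x y xG' yG' x_neq0 y_neq0 x_neq_y.
  by exists i, c => //; split=> //; apply: leqW.
by exists j.+1, c.
Qed.

Lemma run_discards i c : (i <= N)%N -> c \in st_CP (s i) ->
  exists j, [/\ (i <= j < N)%N, c \in st_CP (s j) & c \notin st_CP (s j.+1)].
Proof.
move=> le_iN; have [d] : exists d, (i + d)%N = N by exists (N - i)%N; rewrite subnKC.
elim: d i {le_iN} => [|d IH] i iN cCP.
  by move: cCP; rewrite addn0 in iN; rewrite iN; case: run => _ _ _ _ ->.
have [cCP'|c_gone] := boolP (c \in st_CP (s i.+1)).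
  have iN' : (i.+1 + d)%N = N by rewrite addSnnS.
  have [j [/andP[lt_ij lt_jN] cCPj c_gone]] := IH i.+1 iN' cCP'.
  by exists j; rewrite (ltnW lt_ij) lt_jN.
by exists i; rewrite leqnn -iN addnS ltnS leq_addr.
Qed.

(* A regular pair is either discarded as gen-rewritable, or its S-polynomial is
   reduced to some [h] of the same signature, which admissibility puts below [f]. *)
Lemma run_regular_pair_rewritable i c : (i <= N)%N -> c \in st_CP (s i) ->
  regular ltM c -> cp_gen_rewritable ltM G L c.
Proof.
move=> le_iN cCP c_reg.
have [j [/andP[_ lt_jN] cCPj c_gone]] := run_discards le_iN cCP.
have [sub_jN ext_jN] := run_mono (ltnW lt_jN) (leqnn N).
have [sub_j1N ext_j1N] := run_mono lt_jN (leqnn N).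
have [sub_jj1 _] := agc_step_mono (run_step lt_jN).
case: (agc_step_discards (run_step lt_jN) cCPj c_gone) => [c_skipped|[h [ev_h sig_h hG]]].
  apply: cp_gen_rewritable_mono sub_jN ext_jN _.
  by apply: NNPP => not_rw; apply: c_skipped.
have [_ _ /(_ c cCPj)[p [q [pG qG pq_c]]]] := run_invariant (ltnW lt_jN).
have [[fG f_neq0]] : cp_f c \in st_G (s j) /\ (cp_f c).1 != 0.
  by have [p_neq0 q_neq0] := crit_pair_neq0 pq_c; case: (crit_pair_mem pq_c) => -[->].
left; split; first exact: sub_jN.
split=> //; exists h; first exact: sub_j1N.
split; first by rewrite sig_h mdiv_refl.
by apply/ext_j1N; [|apply: sub_jj1|apply: admissible ev_h].
Qed.

Lemma G_inI g : g \in G -> in_I g.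
Proof. by case: (run_invariant (leqnn N)) => + _ _; apply. Qed.

Lemma G_porder : porder_on G L.
Proof. by case: (run_invariant (leqnn N)). Qed.

Lemma unitv_in_G i : (F i, unitv i) \in G.
Proof.
have [sub _] := run_mono (leq0n N) (leqnn N).
by apply: sub; case: run => -> _ _ _ _; apply: unitv_in_G0.
Qed.

Lemma regular_crit_pair_rewritable x y c : x \in G -> y \in G -> x != y ->
  crit_pair x y = Some c -> crit_pair y x = Some c -> regular ltM c ->
  cp_gen_rewritable ltM G L c.
Proof.
move=> xG yG x_neq_y xy_c yx_c c_reg; have [x_neq0 y_neq0] := crit_pair_neq0 xy_c.
have [i [c' [le_iN c'CP] c'_pair]] := run_pairs (leqnn N) xG yG x_neq0 y_neq0 x_neq_y.
have c'_eq : c' = c by case: c'_pair; rewrite ?xy_c ?yx_c => -[].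
subst c'.
exact: run_regular_pair_rewritable le_iN c'CP c_reg.
Qed.

Definition min_sig_divisor (T : modmon n m) (g : lpoly) :=
  [/\ g \in G, mdiv (sig g) (Some T)
    & forall g', g' \in G -> mdiv (sig g') (Some T) -> ~ L g' g].

Lemma exists_min_sig_divisor T : exists g, min_sig_divisor T g.
Proof.
have [L_irr L_trans] := G_porder.
have has_div : has (fun g => mdiv (sig g) (Some T)) G.
  apply/hasP; exists (F T.2, unitv T.2); first exact: unitv_in_G.
  by rewrite sig_unitv /= eqxx; apply/mnm_lepP => j; rewrite mnm0E.
by have [g [gG g_div g_min]] := seq_minimal L_irr L_trans has_div; exists g.
Qed.

Lemma min_sig_divisor_multiple T g : min_sig_divisor T g -> exists t, sig (lpmul t g) = Some T.
Proof.
case=> _ + _; case E: (sig g) => [x|] //= /andP[/eqP x2 le_x1].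
exists (T.1 - x.1)%MM; rewrite sig_lpmul // E /= /mshift submK // x2.
by case: T {le_x1 x2}.
Qed.

Definition reduces_lead (g : lpoly) (b : 'X_{1..n}) (X : option (modmon n m)) :=
  exists t, lpp (lpmul t g).1 = Some b /\ olt ltM (sig (lpmul t g)) X.

Definition covers_lead (g : lpoly) (b : 'X_{1..n}) (X : option (modmon n m)) :=
  exists t, lpp (lpmul t g).1 = Some b /\ ole ltM (sig (lpmul t g)) X.

Lemma reduces_lead_sig g b T : g \in G -> reduces_lead g b (Some T) ->
  exists t T', [/\ lpp (lpmul t g).1 = Some b, sig (lpmul t g) = Some T' & ltM T' T].
Proof.
move=> gG [t [lpp_tg lt_tg]].
have tg_neq0 : (lpmul t g).1 != 0 by rewrite -(lpp_eqN ltR) lpp_tg.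
have [T' sig_tg] := inI_sig ltM (inI_lpscale 1 t (G_inI gG)) tg_neq0.
by exists t, T'; split=> //; rewrite sig_tg in lt_tg.
Qed.

Definition covered_at (T : modmon n m) :=
  forall p b, in_I p -> lpp p.1 = Some b -> sig p = Some T ->
  exists2 g, g \in G & covers_lead g b (Some T).

Definition min_irreducible (T : modmon n m) :=
  forall g t b, min_sig_divisor T g -> sig (lpmul t g) = Some T ->
  lpp (lpmul t g).1 = Some b -> forall g', g' \in G -> ~ reduces_lead g' b (Some T).

Definition min_multiple_below (T : modmon n m) :=
  forall g t b, g \in G -> sig (lpmul t g) = Some T -> lpp (lpmul t g).1 = Some b ->
  exists g0 t0 T0, [/\ ole ltM (Some T0) (Some T), min_sig_divisor T0 g0,
                      sig (lpmul t0 g0) = Some T0 & lpp (lpmul t0 g0).1 = Some b].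

(* Both multiples share the leading term [b], so they are multiples of the two
   sides of the critical pair of [g] and [g']; that pair is regular, hence
   gen-rewritable by the output, against the minimality of [g] or of [g']. *)
Lemma min_multiples_sig_le T T' g g' t t' b :
  min_sig_divisor T g -> min_sig_divisor T' g' ->
  sig (lpmul t g) = Some T -> sig (lpmul t' g') = Some T' ->
  lpp (lpmul t g).1 = Some b -> lpp (lpmul t' g').1 = Some b -> ~ ltM T' T.
Proof.
move=> [gG _ g_min] [g'G _ g'_min] sig_tg sig_t'g'.
rewrite !lpp_lpmul; case E: (lpp g.1) => [a|] //= [ta_b].
case E': (lpp g'.1) => [a'|] //= [t'a'_b] lt_T'T.
have [[M_irr _ _ _] _] := ltM_order.
set l := mlcm a a'; set w := (b - l)%MM.
have le_lb : (l <= b)%MM.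
  by rewrite lem_mlcm; apply/andP; split; [rewrite -ta_b|rewrite -t'a'_b]; apply: lem_addl.
have t_split : t = (w + (l - a))%MM by rewrite -(subm_split (lem_mlcml a a')) // -ta_b addmK.
have t'_split : t' = (w + (l - a'))%MM.
  by rewrite -(subm_split (lem_mlcmr a a')) // -t'a'_b addmK.
move: sig_tg sig_t'g'; rewrite t_split t'_split !sig_lpmulD //.
case Ex: (sig (lpmul (l - a) g)) => [x|] //= [Tx].
case Ey: (sig (lpmul (l - a') g')) => [y|] //= [Ty].
have lt_yx : ltM y x by rewrite -(ltM_mshift ltM_order w) Tx Ty.
have g_neq_g' : g != g'.
  apply: contraTneq lt_yx => g_eq; move: E' Ey; rewrite -g_eq E => -[<-].
  by rewrite Ex => -[->]; rewrite M_irr.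
have lt_sig : olt ltM (sig (lpmul (l - a') g')) (sig (lpmul (l - a) g)) by rewrite Ex Ey.
have [gg' g'g] := crit_pair_regular E E' lt_sig.
case: (regular_crit_pair_rewritable gG g'G g_neq_g' gg' g'g lt_sig).
  move=> [_ [_ [g'' g''G [g''_div lt_g''g]]]]; apply: (g_min g'' g''G) => //.
  have : mdiv (sig g'') (sig (lpmul (l - a) g)) := g''_div.
  by rewrite Ex -Tx; apply: mdiv_mshift.
move=> [_ [_ [g'' g''G [g''_div lt_g''g']]]]; apply: (g'_min g'' g''G) => //.
have : mdiv (sig g'') (sig (lpmul (l - a') g')) := g''_div.
by rewrite Ey -Ty; apply: mdiv_mshift.
Qed.

Lemma covered_below_reduces T : (forall T', ltM T' T -> covered_at T') ->
  forall r b, in_I r -> lpp r.1 = Some b -> olt ltM (sig r) (Some T) ->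
  exists2 g, g \in G & reduces_lead g b (Some T).
Proof.
move=> covered r b rI lpp_r lt_r.
have r_neq0 : r.1 != 0 by rewrite -(lpp_eqN ltR) lpp_r.
have [T' sig_r] := inI_sig ltM rI r_neq0.
rewrite sig_r in lt_r; have [g gG [t [lpp_tg le_tg]]] := covered T' lt_r r b rI lpp_r sig_r.
by exists g => //; exists t; split=> //; apply: (ole_olt_trans _ le_tg lt_r); case: ltM_order.
Qed.

(* The difference of [p] and a multiple of [t g] has smaller signature, and its
   leading term is the larger of [b] and the leading term of [t g]. *)
Lemma reduce_after_cancel T p b g t : (forall T', ltM T' T -> covered_at T') ->
  in_I p -> lpp p.1 = Some b -> sig p = Some T ->
  g \in G -> sig (lpmul t g) = Some T -> lpp (lpmul t g).1 != Some b ->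
  exists2 g2, g2 \in G & if olt ltR (lpp (lpmul t g).1) (Some b)
    then reduces_lead g2 b (Some T)
    else exists2 b', lpp (lpmul t g).1 = Some b' & reduces_lead g2 b' (Some T).
Proof.
move=> covered pI lpp_p sig_p gG sig_tg lpp_neq.
have [c c_neq0 [rI lt_r]] := sig_cancel ltM_order pI (G_inI gG) sig_p sig_tg.
have := lpp_subr ltR_order lpp_p (_ : lpp (lpscale c t g).1 != Some b).
rewrite (lpp_lpscale ltR_order _ _ c_neq0) => /(_ lpp_neq).
case: ifP => [_ lpp_r|]; first exact: covered_below_reduces covered _ _ rI lpp_r lt_r.
case: (lpp (lpmul t g).1) => // b' _ lpp_r.
have [g2 g2G red] := covered_below_reduces covered rI lpp_r lt_r.
by exists g2 => //; exists b'.
Qed.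

Lemma min_irreducible_step T : (forall T', ltM T' T -> min_multiple_below T') ->
  min_irreducible T.
Proof.
move=> below g t b g_min sig_tg lpp_tg g' g'G /(reduces_lead_sig g'G).
move=> [t' [T' [lpp_t'g' sig_t'g' lt_T'T]]].
have [g0 [t0 [T0 [le_T0T' g0_min sig0 lpp0]]]] := below T' lt_T'T g' t' b g'G sig_t'g' lpp_t'g'.
have lt_T0T : olt ltM (Some T0) (Some T).
  by apply: (ole_olt_trans _ le_T0T' (lt_T'T : olt ltM (Some T') (Some T))); case: ltM_order.
exact: (min_multiples_sig_le g_min g0_min sig_tg sig0 lpp_tg lpp0 lt_T0T).
Qed.

Lemma min_multiple_below_step T :
  (forall T', ltM T' T -> covered_at T' /\ min_multiple_below T') ->
  min_irreducible T -> min_multiple_below T.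
Proof.
move=> IH irr g' t' b g'G sig_t'g' lpp_t'g'.
have [g g_min] := exists_min_sig_divisor T; have [gG _ _] := g_min.
have [t sig_tg] := min_sig_divisor_multiple g_min.
have [lpp_tg|lpp_neq] := eqVneq (lpp (lpmul t g).1) (Some b).
  by exists g, t, T; rewrite /ole eqxx.
have t'g'_inI : in_I (lpmul t' g') := inI_lpscale 1 t' (G_inI g'G).
have covered T' (lt_T'T : ltM T' T) := (IH T' lt_T'T).1.
have [g2 g2G] := reduce_after_cancel covered t'g'_inI lpp_t'g' sig_t'g' gG sig_tg lpp_neq.
case: ifP => _; last by case=> b' lpp_b' red; case: (irr g t b' g_min sig_tg lpp_b' g2 g2G).
move=> /(reduces_lead_sig g2G)[t2 [T2 [lpp2 sig2 lt_T2T]]].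
have [g0 [t0 [T0 [le_T0T2 g0_min sig0 lpp0]]]] := (IH T2 lt_T2T).2 g2 t2 b g2G sig2 lpp2.
exists g0, t0, T0; split=> //; apply/orP; right.
by apply: (ole_olt_trans _ le_T0T2 (lt_T2T : olt ltM (Some T2) (Some T))); case: ltM_order.
Qed.

Lemma covered_step T : (forall T', ltM T' T -> covered_at T') ->
  min_irreducible T -> covered_at T.
Proof.
move=> covered irr p b pI lpp_p sig_p.
have [g g_min] := exists_min_sig_divisor T; have [gG _ _] := g_min.
have [t sig_tg] := min_sig_divisor_multiple g_min.
have [lpp_tg|lpp_neq] := eqVneq (lpp (lpmul t g).1) (Some b).
  by exists g => //; exists t; rewrite sig_tg /ole eqxx.
have [g2 g2G] := reduce_after_cancel covered pI lpp_p sig_p gG sig_tg lpp_neq.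
case: ifP => _; last by case=> b' lpp_b' red; case: (irr g t b' g_min sig_tg lpp_b' g2 g2G).
by case=> t2 [lpp2 lt2]; exists g2 => //; exists t2; rewrite lpp2 /ole lt2 orbT.
Qed.

Lemma covered_and_min_multiple_below T : covered_at T /\ min_multiple_below T.
Proof.
have [[_ _ _ ltM_wf] _] := ltM_order.
elim/(well_founded_ind ltM_wf): T => T IH.
have irr := min_irreducible_step (fun T' lt_T'T => (IH T' lt_T'T).2).
split; last exact: min_multiple_below_step IH irr.
by apply: covered_step irr => T' /IH[].
Qed.

End Run.
End AGCRun.

Theorem theorem3p1 (k : fieldType) (n m : nat)
    (ltR : rel 'X_{1..n}) (ltM : rel (modmon n m))
    (F : 'I_m -> {mpoly k[n]}) :
  term_order ltR -> module_term_order ltM ->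
  forall (N : nat) (s : nat -> state k n m)
         (e : nat -> option (lpoly k n m * lpoly k n m)),
    agc_run ltR ltM F N s e ->
    admissible_run N s e ->
    labeled_GB ltR ltM F (st_G (s N)).
Proof.
move=> ltR_order ltM_order N s e run admissible.
split=> [|p pI p_neq0]; first exact: G_inI run.
have [T sig_p] := inI_sig ltM pI p_neq0.
have [b lpp_p] : exists b, lpp ltR p.1 = Some b.
  by case E: (lpp ltR p.1) => [b|]; [exists b|move: p_neq0; rewrite -(lpp_eqN ltR) E].
have [covered _] := covered_and_min_multiple_below ltR_order ltM_order run admissible T.
have [g gG [t [lpp_tg le_tg]]] := covered p b pI lpp_p sig_p.
move: lpp_tg; rewrite lpp_lpmul; case lpp_g: (lpp ltR g.1) => [a|] //= [ta_b].
exists g => //; rewrite lpp_g lpp_p; split; first by rewrite -ta_b; apply: lem_addl.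
by exists a, b; rewrite /pquot -ta_b addmK sig_p.
Qed.
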